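(* If $X$ is a second-countable well-filtered space, then the upper Vietoris topology and the Scott topology on $\mathsf{K}(X)$ coincide.
   Context: Spaces are $T_0$; specialization order $x\le y$ iff $x\in\overline{\{y\}}$; saturated = upper set. $\mathsf{K}(X)$ = nonempty compact saturated subsets ordered by reverse inclusion. Scott topology on a poset: upper sets $U$ such that every directed $D$ whose supremum exists and lies in $U$ meets $U$. Upper Vietoris topology on $\mathsf{K}(X)$: base $\Box U=\{K:K\subseteq U\}$, $U$ open. Well-filtered: for open $U$ and $\mathcal K\subseteq\mathsf{K}(X)$ filtered under inclusion, $\bigcap\mathcal K\subseteq U$ implies some $K\in\mathcal K$ lies in $U$. *)

From Stdlib Require Import List Classical.

Record TopSpace := {
  carrier :> Type;
  is_open : (carrier -> Prop) -> Prop;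
  open_full : is_open (fun _ => True);
  open_inter : forall U V, is_open U -> is_open V -> is_open (fun x => U x /\ V x);
  open_union : forall F : (carrier -> Prop) -> Prop,
      (forall U, F U -> is_open U) -> is_open (fun x => exists U, F U /\ U x);
  open_ext : forall U V, is_open U -> (forall x, U x <-> V x) -> is_open V
}.

Section Defs.
Variable X : TopSpace.

Definition subset (A B : X -> Prop) : Prop := forall x, A x -> B x.

Definition T0 : Prop :=
  forall x y : X, (forall U, is_open X U -> (U x <-> U y)) -> x = y.

Definition spec_le (x y : X) : Prop :=
  forall U, is_open X U -> U x -> U y.

Definition saturated (A : X -> Prop) : Prop :=
  forall x y, A x -> spec_le x y -> A y.

Definition compact (K : X -> Prop) : Prop :=
  forall F : (X -> Prop) -> Prop,
    (forall U, F U -> is_open X U) ->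
    (forall x, K x -> exists U, F U /\ U x) ->
    exists l : list (X -> Prop), Forall F l /\
      (forall x, K x -> exists U, In U l /\ U x).

(* elements of K(X): nonempty compact saturated subsets *)
Definition inK (K : X -> Prop) : Prop :=
  (exists x, K x) /\ compact K /\ saturated K.

Definition second_countable : Prop :=
  exists B : nat -> (X -> Prop),
    (forall n, is_open X (B n)) /\
    (forall U, is_open X U -> forall x, U x -> exists n, B n x /\ subset (B n) U).

Definition filtered (D : (X -> Prop) -> Prop) : Prop :=
  (exists K, D K) /\
  (forall K1 K2, D K1 -> D K2 -> exists K3, D K3 /\ subset K3 K1 /\ subset K3 K2).

Definition well_filtered : Prop :=
  forall (U : X -> Prop) (KK : (X -> Prop) -> Prop),
    is_open X U ->
    (forall K, KK K -> inK K) ->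
    filtered KK ->
    subset (fun x => forall K, KK K -> K x) U ->
    exists K, KK K /\ subset K U.

(* Subsets of K(X) are represented by predicates on subsets of X; only their
   values on elements of K(X) matter.  K(X) is ordered by reverse inclusion:
   K1 <= K2 iff K2 ⊆ K1. *)

(* upper Vietoris topology: generated by the base Box U = {K : K ⊆ U}, U open *)
Definition upper_vietoris_open (O : (X -> Prop) -> Prop) : Prop :=
  forall K, inK K -> O K ->
    exists U, is_open X U /\ subset K U /\
      (forall K', inK K' -> subset K' U -> O K').

Definition is_sup_K (D : (X -> Prop) -> Prop) (S : X -> Prop) : Prop :=
  inK S /\ (forall K, D K -> subset S K) /\
  (forall T, inK T -> (forall K, D K -> subset T K) -> subset T S).

Definition scott_open (O : (X -> Prop) -> Prop) : Prop :=
  (forall K K', inK K -> inK K' -> O K -> subset K' K -> O K') /\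
  (forall D : (X -> Prop) -> Prop,
     (forall K, D K -> inK K) -> filtered D ->
     forall S, is_sup_K D S -> O S -> exists K, D K /\ O K).

End Defs.

(* Upper Vietoris open sets are Scott open because, by well-filteredness, the
   infimum of a filtered family in K(X) is its intersection, and an open set
   containing that intersection already contains a member of the family.
   Conversely, let O be Scott open with K ∈ O, and suppose no box □V around K
   lies inside O.  Second countability gives open neighbourhoods V_0, V_1, ...
   of K that eventually enter every neighbourhood of K; pick K_n ⊆ V_n outside
   O.  The tails K ∪ ⋃_{m ≥ n} K_m are compact saturated, form a filtered family
   whose intersection is K (K is saturated), so Scott openness puts some tail in
   O, and then the smaller K_n as well: a contradiction. *)
From Stdlib Require Import List Classical.
From Stdlib Require Import Arith Lia IndefiniteDescription.

Lemma testbits_of_list (A : Type) (f : nat -> A) (P : nat -> Prop) (l : list A) :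
  Forall (fun a => exists i, P i /\ a = f i) l ->
  exists n, (forall i, Nat.testbit n i = true -> P i) /\
            (forall a, In a l -> exists i, Nat.testbit n i = true /\ a = f i).
Proof.
  induction 1 as [|a l [i0 [Pi0 ->]] _ [n [HP Hl]]].
  - exists 0; split; [|intros _ []].
    intros i; rewrite Nat.bits_0; discriminate.
  - exists (Nat.setbit n i0); split.
    + intros i; rewrite Nat.setbit_iff; intros [<-|t]; auto.
    + intros a [<-|ina].
      * exists i0; rewrite Nat.setbit_iff; auto.
      * destruct (Hl a ina) as [i [t e]]; exists i; rewrite Nat.setbit_iff; auto.
Qed.

Section Topology.
Variable X : TopSpace.

Lemma open_empty : is_open X (fun _ => False).
Proof.
  apply (open_ext X (fun x => exists U, (fun _ : X -> Prop => False) U /\ U x)).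
  - apply open_union; intros U [].
  - intros x; split; [intros [U [[] _]] | intros []].
Qed.

Lemma open_if (P : Prop) (W : X -> Prop) :
  is_open X W -> is_open X (fun x => P -> W x).
Proof.
  intros HW; destruct (classic P) as [p|np].
  - apply (open_ext X W); [exact HW|]; intros x; tauto.
  - apply (open_ext X (fun _ => True)); [apply open_full|]; intros x; tauto.
Qed.

Lemma open_bigcup_list (l : list (X -> Prop)) :
  Forall (is_open X) l -> is_open X (fun x => exists U, In U l /\ U x).
Proof.
  rewrite Forall_forall; intros Hl; apply open_union; exact Hl.
Qed.

Lemma compact_ext (A B : X -> Prop) :
  compact X A -> (forall x, A x <-> B x) -> compact X B.
Proof.
  intros HA AB F HF cover; destruct (HA F HF) as [l [Fl Hl]].
  - intros x Ax; apply cover, AB, Ax.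
  - exists l; split; [exact Fl|]; intros x Bx; apply Hl, AB, Bx.
Qed.

Lemma compact_empty : compact X (fun _ => False).
Proof. intros F _ _; exists nil; split; [constructor | intros x []]. Qed.

Lemma compact_union (A B : X -> Prop) :
  compact X A -> compact X B -> compact X (fun x => A x \/ B x).
Proof.
  intros HA HB F HF cover.
  destruct (HA F HF) as [l1 [F1 H1]]; [intros x Ax; apply cover; auto|].
  destruct (HB F HF) as [l2 [F2 H2]]; [intros x Bx; apply cover; auto|].
  exists (l1 ++ l2); split; [apply Forall_app; auto|].
  intros x [Ax|Bx]; [destruct (H1 x Ax) as [U [i u]] | destruct (H2 x Bx) as [U [i u]]];
    exists U; rewrite in_app_iff; auto.
Qed.

Lemma compact_bigcup_lt (P : nat -> Prop) (Kf : nat -> X -> Prop) (N : nat) :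
  (forall m, m < N -> P m -> compact X (Kf m)) ->
  compact X (fun x => exists m, m < N /\ P m /\ Kf m x).
Proof.
  induction N as [|N IH]; intros HK.
  - apply (compact_ext _ _ compact_empty); intros x; split; [intros []|].
    intros [m [lt _]]; lia.
  - apply (compact_ext (fun x => (exists m, m < N /\ P m /\ Kf m x) \/ (P N /\ Kf N x))).
    + apply compact_union; [apply IH; auto|].
      destruct (classic (P N)) as [p|np].
      * apply (compact_ext (Kf N)); [apply HK; auto | intros; tauto].
      * apply (compact_ext _ _ compact_empty); intros; tauto.
    + intros x; split.
      * intros [[m [lt [p k]]]|[p k]]; [exists m | exists N]; repeat split; auto.
      * intros [m [lt [p k]]]; destruct (Nat.eq_dec m N) as [->|ne]; [now right|].
        left; exists m; repeat split; auto; lia.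
Qed.

Lemma saturated_separate (K : X -> Prop) (x : X) :
  saturated X K -> ~ K x -> exists U, is_open X U /\ subset X K U /\ ~ U x.
Proof.
  intros Ks nKx.
  exists (fun y => exists V, (is_open X V /\ ~ V x) /\ V y); repeat split.
  - apply open_union; intros V [Vo _]; exact Vo.
  - intros y Ky; apply NNPP; intros nU; apply nKx, (Ks y x Ky).
    intros V Vo Vy; apply NNPP; intros nVx; apply nU; exists V; auto.
  - intros [V [[_ nVx] Vx]]; exact (nVx Vx).
Qed.

Lemma well_filtered_inter_inK (D : (X -> Prop) -> Prop) :
  well_filtered X -> (forall K, D K -> inK X K) -> filtered X D ->
  inK X (fun x => forall K, D K -> K x).
Proof.
  intros WF HD Dfilt; split; [|split].
  - apply NNPP; intros empty.
    destruct (WF (fun _ => False) D open_empty HD Dfilt) as [K [DK KE]].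
    + intros x Ix; apply empty; exists x; exact Ix.
    + destruct (HD K DK) as [[x Kx] _]; exact (KE x Kx).
  - intros F HF cover.
    destruct (WF _ D (open_union X F HF) HD Dfilt cover) as [K [DK KF]].
    destruct (HD K DK) as [_ [Kc _]]; destruct (Kc F HF KF) as [l [Fl Hl]].
    exists l; split; [exact Fl|]; intros x Ix; apply Hl, Ix, DK.
  - intros x y Ix le K DK; destruct (HD K DK) as [_ [_ Ks]]; exact (Ks x y (Ix K DK) le).
Qed.

Lemma upper_vietoris_open_scott_open (O : (X -> Prop) -> Prop) :
  well_filtered X -> upper_vietoris_open X O -> scott_open X O.
Proof.
  intros WF UV; split.
  - intros K K' HK HK' OK K'K; destruct (UV K HK OK) as [U [_ [KU box]]].
    apply box; [exact HK'|]; intros x K'x; apply KU, K'K, K'x.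
  - intros D HD Dfilt S [HS [_ Sgreatest]] OS.
    destruct (UV S HS OS) as [U [Uo [SU box]]].
    assert (inter_S : subset X (fun x => forall K, D K -> K x) S).
    { apply Sgreatest; [exact (well_filtered_inter_inK D WF HD Dfilt)|].
      intros K DK x Ix; exact (Ix K DK). }
    destruct (WF U D Uo HD Dfilt (fun x Ix => SU x (inter_S x Ix))) as [K [DK KU]].
    exists K; split; [exact DK | apply box; [exact (HD K DK) | exact KU]].
Qed.

Definition upper_converges (Kf : nat -> X -> Prop) (K : X -> Prop) : Prop :=
  forall U, is_open X U -> subset X K U ->
    exists N, forall m, N <= m -> subset X (Kf m) U.

(* The finite unions of basic open sets, indexed by the bits of [n]. *)
Lemma compact_countable_nbhd_base (K : X -> Prop) :
  second_countable X -> compact X K ->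
  exists W : nat -> X -> Prop, (forall n, is_open X (W n)) /\
    forall U, is_open X U -> subset X K U ->
      exists n, subset X K (W n) /\ subset X (W n) U.
Proof.
  intros [B [Bo Bbase]] Kc.
  exists (fun n x => exists i, Nat.testbit n i = true /\ B i x); split.
  - intros n.
    apply (open_ext X (fun x => exists U,
             (fun V => exists i, Nat.testbit n i = true /\ V = B i) U /\ U x)).
    + apply open_union; intros U [i [_ ->]]; apply Bo.
    + intros x; split.
      * intros [U [[i [t ->]] u]]; exists i; auto.
      * intros [i [t b]]; exists (B i); eauto.
  - intros U Uo KU.
    destruct (Kc (fun V => exists i, subset X (B i) U /\ V = B i)) as [l [Fl Hl]].
    + intros V [i [_ ->]]; apply Bo.
    + intros x Kx; destruct (Bbase U Uo x (KU x Kx)) as [i [Bix BiU]].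
      exists (B i); eauto.
    + destruct (testbits_of_list _ B _ l Fl) as [n [bitsU bitsl]].
      exists n; split.
      * intros x Kx; destruct (Hl x Kx) as [V [inV Vx]].
        destruct (bitsl V inV) as [i [t ->]]; exists i; auto.
      * intros x [i [t Bix]]; exact (bitsU i t x Bix).
Qed.

(* [V n] is the intersection of those [W j], [j <= n], that contain [K]. *)
Lemma compact_converging_nbhds (K : X -> Prop) :
  second_countable X -> compact X K ->
  exists V : nat -> X -> Prop,
    (forall n, is_open X (V n)) /\ (forall n, subset X K (V n)) /\ upper_converges V K.
Proof.
  intros SC Kc; destruct (compact_countable_nbhd_base K SC Kc) as [W [Wo Wbase]].
  exists (fun n x => forall j, j <= n -> subset X K (W j) -> W j x); repeat split.
  - induction n as [|n IH].
    + apply (open_ext X (fun x => subset X K (W 0) -> W 0 x)); [now apply open_if|].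
      intros x; split; [intros h j hj; replace j with 0 by lia; exact h | intros h; now apply h].
    + apply (open_ext X (fun x => (forall j, j <= n -> subset X K (W j) -> W j x) /\
                                  (subset X K (W (S n)) -> W (S n) x))).
      * apply open_inter; [exact IH | now apply open_if].
      * intros x; split.
        -- intros [h1 h2] j hj; destruct (Nat.eq_dec j (S n)) as [->|ne]; [exact h2|].
           apply h1; lia.
        -- intros h; split; [intros j hj; apply h; lia | apply h; lia].
  - intros n x Kx j _ KW; exact (KW x Kx).
  - intros U Uo KU; destruct (Wbase U Uo KU) as [j [KW WU]].
    exists j; intros m jm x Vx; apply WU, Vx; assumption.
Qed.

Section Tails.
Variables (K : X -> Prop) (Kf : nat -> X -> Prop).
Hypotheses (HK : inK X K) (HKf : forall m, inK X (Kf m)) (conv : upper_converges Kf K).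

Definition tail_union (n : nat) (x : X) : Prop := K x \/ exists m, n <= m /\ Kf m x.

(* Outside a neighbourhood of [K] only finitely many [Kf m] remain to be covered. *)
Lemma tail_union_compact (n : nat) : compact X (tail_union n).
Proof.
  destruct HK as [_ [Kc _]]; intros F HF cover.
  destruct (Kc F HF) as [l1 [F1 H1]]; [intros x Kx; apply cover; now left|].
  destruct (conv _ (open_bigcup_list l1 (Forall_impl _ HF F1)) H1) as [N HN].
  destruct (compact_bigcup_lt (fun m => n <= m) Kf N
              (fun m _ _ => proj1 (proj2 (HKf m))) F HF) as [l2 [F2 H2]].
  { intros x [m [_ [nm Kmx]]]; apply cover; right; exists m; auto. }
  exists (l1 ++ l2); split; [apply Forall_app; auto|].
  intros x [Kx|[m [nm Kmx]]].
  - destruct (H1 x Kx) as [U [i u]]; exists U; rewrite in_app_iff; auto.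
  - destruct (le_lt_dec N m) as [Nm|mN].
    + destruct (HN m Nm x Kmx) as [U [i u]]; exists U; rewrite in_app_iff; auto.
    + destruct (H2 x) as [U [i u]]; [exists m; auto|]; exists U; rewrite in_app_iff; auto.
Qed.

Lemma tail_union_inK (n : nat) : inK X (tail_union n).
Proof.
  destruct HK as [[x0 Kx0] [_ Ks]]; split; [|split].
  - exists x0; now left.
  - apply tail_union_compact.
  - intros x y [Kx|[m [nm Kmx]]] le; [left; exact (Ks x y Kx le)|].
    right; exists m; split; [exact nm|].
    destruct (HKf m) as [_ [_ Kms]]; exact (Kms x y Kmx le).
Qed.

Definition tails (L : X -> Prop) : Prop := exists n, L = tail_union n.

Lemma tails_filtered : filtered X tails.
Proof.
  split; [exists (tail_union 0); now exists 0|].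
  intros L1 L2 [n1 ->] [n2 ->]; exists (tail_union (max n1 n2)).
  split; [now exists (max n1 n2)|].
  split; intros x [Kx|[m [nm Kmx]]]; try (now left); right; exists m; split; auto; lia.
Qed.

Lemma tails_sup : is_sup_K X tails K.
Proof.
  destruct HK as [_ [_ Ks]]; split; [exact HK | split].
  - intros L [n ->] x Kx; now left.
  - intros T _ lower x Tx; apply NNPP; intros nKx.
    destruct (saturated_separate K x Ks nKx) as [U [Uo [KU nUx]]].
    destruct (conv U Uo KU) as [N HN].
    destruct (lower (tail_union N) (ex_intro _ N eq_refl) x Tx) as [Kx|[m [Nm Kmx]]].
    + exact (nKx Kx).
    + exact (nUx (HN m Nm x Kmx)).
Qed.

End Tails.

Lemma scott_open_upper_vietoris_open (O : (X -> Prop) -> Prop) :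
  second_countable X -> scott_open X O -> upper_vietoris_open X O.
Proof.
  intros SC [Oupper Oscott] K HK OK; apply NNPP; intros no_box.
  assert (escape : forall U, is_open X U -> subset X K U ->
                   exists K', inK X K' /\ subset X K' U /\ ~ O K').
  { intros U Uo KU; apply NNPP; intros h; apply no_box; exists U; repeat split; auto.
    intros K' HK' K'U; apply NNPP; intros nO; apply h; exists K'; auto. }
  destruct (compact_converging_nbhds K SC (proj1 (proj2 HK))) as [V [Vo [KV Vconv]]].
  destruct (functional_choice _ (fun n => escape (V n) (Vo n) (KV n))) as [Kf HKf].
  assert (Kfconv : upper_converges Kf K).
  { intros U Uo KU; destruct (Vconv U Uo KU) as [N HN]; exists N.
    intros m Nm x Kmx; destruct (HKf m) as [_ [KmV _]]; exact (HN m Nm x (KmV x Kmx)). }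
  assert (HKfK : forall m, inK X (Kf m)) by (intros m; apply HKf).
  destruct (Oscott (tails K Kf)) with (S := K) as [L [[n ->] OL]].
  - intros L [n ->]; exact (tail_union_inK K Kf HK HKfK Kfconv n).
  - apply tails_filtered.
  - exact (tails_sup K Kf HK Kfconv).
  - exact OK.
  - destruct (HKf n) as [HKn [_ nOKn]]; apply nOKn.
    apply (Oupper (tail_union K Kf n)); auto.
    + exact (tail_union_inK K Kf HK HKfK Kfconv n).
    + intros x Knx; right; exists n; auto.
Qed.

End Topology.

Theorem mainTheorem16 (X : TopSpace) :
  T0 X -> second_countable X -> well_filtered X ->
  forall O : (X -> Prop) -> Prop,
    upper_vietoris_open X O <-> scott_open X O.
Proof.
  intros _ SC WF O; split.
  - exact (upper_vietoris_open_scott_open X O WF).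
  - exact (scott_open_upper_vietoris_open X O SC).
Qed.
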